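(* Every monotone clause elimination procedure is MUS-preserving: if $\mathsf{E}$ is a monotone clause elimination procedure, then $\mathsf{MUS}(\mathsf{E}(F)) = \mathsf{MUS}(F)$ for every CNF formula $F$.
   Context: A CNF formula is a finite set of clauses (finite sets of literals). A clause elimination procedure $\mathsf{E}$ maps every CNF formula $F$ to a formula $\mathsf{E}(F) \subseteq F$ that is equisatisfiable with $F$. $\mathsf{E}$ is monotone if $F' \subseteq F$ implies $\mathsf{E}(F') \subseteq \mathsf{E}(F)$. For a CNF formula $F$, $\mathsf{MUS}(F)$ denotes the set of minimal unsatisfiable subsets of $F$ (unsatisfiable $M \subseteq F$ all of whose proper subsets are satisfiable). *)

From mathcomp Require Import all_boot.
From mathcomp Require Import finmap.
Set Implicit Arguments. Unset Strict Implicit. Unset Printing Implicit Defensive.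
Local Open Scope fset_scope.

(* Propositional variables are natural numbers; a literal is a pair
   (variable, polarity): (x, true) is x, (x, false) is its negation. *)
Definition var := nat.
Definition lit := (var * bool)%type.
Definition clause := {fset lit}.
Definition cnf := {fset clause}.

Definition assignment := var -> bool.

Definition lit_true (a : assignment) (l : lit) : bool := a l.1 == l.2.

Definition clause_sat (a : assignment) (C : clause) : Prop :=
  exists2 l, l \in C & lit_true a l.

Definition cnf_sat (a : assignment) (F : cnf) : Prop :=
  forall C, C \in F -> clause_sat a C.

Definition satisfiable (F : cnf) : Prop := exists a, cnf_sat a F.

Definition clause_elimination (E : cnf -> cnf) : Prop :=
  forall F, E F `<=` F /\ (satisfiable (E F) <-> satisfiable F).

Definition monotone (E : cnf -> cnf) : Prop :=
  forall F' F : cnf, F' `<=` F -> E F' `<=` E F.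

Definition is_MUS (F M : cnf) : Prop :=
  M `<=` F /\ ~ satisfiable M /\ (forall M' : cnf, M' `<` M -> satisfiable M').

From mathcomp Require Import all_boot.
From mathcomp Require Import finmap.
Local Open Scope fset_scope.

(* A MUS M of F is a fixpoint of E, since E M is an unsatisfiable subset of M;
   monotonicity then gives M = E M ⊆ E F.  Conversely every MUS of E F is one
   of F because E F ⊆ F. *)

Lemma is_MUS_sub (F G M : cnf) : F `<=` G -> is_MUS F M -> is_MUS G M.
Proof. by move=> sFG [sMF minM]; split=> //; apply: fsubset_trans sFG. Qed.

Lemma clause_elimination_MUS_fixed {E : cnf -> cnf} {F M : cnf} :
  clause_elimination E -> is_MUS F M -> E M = M.
Proof.
move=> elimE [_ [unsatM minM]]; have [sEM satE] := elimE M.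
apply/eqP; apply: contraT => neEM.
have ltEM : E M `<` M by rewrite fproperEneq neEM sEM.
by case: unsatM; apply/satE/minM.
Qed.

Theorem proposition1 (E : cnf -> cnf) :
  clause_elimination E -> monotone E ->
  forall (F M : cnf), is_MUS (E F) M <-> is_MUS F M.
Proof.
move=> elimE monE F M; split; first exact: is_MUS_sub (proj1 (elimE F)).
move=> musM; have [sMF minM] := musM; split=> //.
by rewrite -(clause_elimination_MUS_fixed elimE musM); apply: monE.
Qed.
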